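(* Let $\theta:R\to S$ be a surjective ring homomorphism with $\theta(1)=1$ (so $\theta(C(R))\subseteq C(S)$), and let $g(x)=\sum_{i=0}^n a_ix^i\in C(R)[x]$. If $R$ is weakly $g(x)$-$r$-clean, then $S$ is weakly $\theta'(g(x))$-$r$-clean, where $\theta'(g(x))=\sum_{i=0}^n\theta(a_i)x^i\in C(S)[x]$.
   Context: Rings are associative with identity; $C(R)$ is the center of $R$ and $Reg(R)=\{r: r=ryr \text{ for some } y\in R\}$. For a fixed $g(x)\in C(R)[x]$, an element $z\in R$ is weakly $g(x)$-$r$-clean if $z=r+s$ or $z=r-s$ with $r\in Reg(R)$ and $g(s)=0$; $R$ is weakly $g(x)$-$r$-clean if all its elements are. *)

From mathcomp Require Import all_boot all_order all_algebra.
Set Implicit Arguments. Unset Strict Implicit. Unset Printing Implicit Defensive.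
Import GRing.Theory.
Local Open Scope ring_scope.

Definition central (R : nzRingType) (a : R) : Prop := forall b : R, a * b = b * a.

Definition regular (R : nzRingType) (r : R) : Prop := exists y : R, r = r * y * r.

Definition weakly_gr_clean_elt (R : nzRingType) (g : {poly R}) (z : R) : Prop :=
  exists r s : R, regular r /\ g.[s] = 0 /\ (z = r + s \/ z = r - s).

Definition weakly_gr_clean (R : nzRingType) (g : {poly R}) : Prop :=
  forall z : R, weakly_gr_clean_elt g z.

From mathcomp Require Import all_boot all_order all_algebra.
Import GRing.Theory.
Local Open Scope ring_scope.

(* A ring morphism maps a decomposition z = r +- s with r regular and g(s) = 0
   to f z = f r +- f s with f r regular and (g^f)(f s) = f (g(s)) = 0; by
   surjectivity every element of S is some f z.  Evaluation commutes with f
   for any coefficients, so centrality of the coefficients of g is not used. *)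

Lemma rmorph_regular (R S : nzRingType) (f : {rmorphism R -> S}) (r : R) :
  regular r -> regular (f r).
Proof. by case=> y ry; exists (f y); rewrite -!rmorphM -ry. Qed.

Lemma rmorph_weakly_gr_clean_elt (R S : nzRingType) (f : {rmorphism R -> S})
    (g : {poly R}) (z : R) :
  weakly_gr_clean_elt g z -> weakly_gr_clean_elt (map_poly f g) (f z).
Proof.
case=> r [s [reg_r [gs0 z_rs]]]; exists (f r), (f s); split.
  exact: rmorph_regular.
split; first by rewrite horner_map gs0 rmorph0.
by case: z_rs => ->; [left; rewrite rmorphD | right; rewrite rmorphB].
Qed.

Theorem proposition3p2 (R S : nzRingType) (theta : {rmorphism R -> S})
  (theta_surj : forall y : S, exists x : R, theta x = y)
  (g : {poly R}) (g_central : forall i : nat, central g`_i) :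
  weakly_gr_clean g -> weakly_gr_clean (map_poly theta g).
Proof.
move=> g_clean z; have [x <-] := theta_surj z.
exact: rmorph_weakly_gr_clean_elt.
Qed.
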